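(* Let $\xi$ be a complex random variable with $\mathbb{E}\xi=0$, $\mathbb{E}|\xi|^2=1$ and $\mathbb{E}|\xi|^{4+\epsilon}<\infty$ for some $\epsilon>0$; let $b_n$ divide $n$, let $\tilde X$ be the $n\times n$ periodic block band matrix with atom variable $\xi$ and bandwidth $b_n$, and $X=\tilde X/\sqrt{3b_n}$. For fixed $z\in\mathbb{C}$ and $\zeta$ with $\Im\zeta>0$, let $P_{z,\zeta}:=(X-zI)(X-zI)^*-\zeta I$. Then for all $1\le i\le n$, $$\mathbb{E}\big[(P_{z,\zeta})^{-1}_{ii}\big]=\mathbb{E}\big[(P_{z,\zeta})^{-1}_{11}\big].$$
   Context: Periodic block band matrix: $m:=n/b_n$; $\tilde D_i,\tilde U_i,\tilde T_i$ ($i\in[m]$) are $3m$ independent $b_n\times b_n$ random matrices with iid entries distributed as $\xi$; $\tilde X$ is the $m\times m$ block matrix (blocks $b_n\times b_n$, block indices modulo $m$) with $(i,i)$ block $\tilde D_i$, $(i,i-1)$ block $\tilde T_{i-1}$, $(i,i+1)$ block $\tilde U_{i+1}$, other blocks zero. *)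

From HB Require Import structures.
From mathcomp Require Import all_boot all_order all_algebra.
From mathcomp Require Import all_classical all_reals all_analysis.
From mathcomp Require Import complex.
Set Implicit Arguments. Unset Strict Implicit. Unset Printing Implicit Defensive.
Import Order.TTheory GRing.Theory Num.Theory.
Local Open Scope classical_set_scope.
Local Open Scope ring_scope.

Section Defs.
Context {R : realType} {d : measure_display} {T : measurableType d}.

Definition cmod (w : R[i]) : R := Normc.normc w.

(* a set of complex numbers is Borel if its image in R*R is Borel
   (Borel(R) (x) Borel(R) = Borel(R^2)) *)
Definition cborel (A : set R[i]) : Prop :=
  measurable [set p : R * R | A (Complex p.1 p.2)].

Definition crv (X : T -> R[i]) : Prop :=
  measurable_fun setT (fun t => (complex.Re (X t), complex.Im (X t))).

Definition cindep (P : probability T R) (I : finType) (Y : I -> T -> R[i]) : Prop :=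
  forall (J : {set I}) (A : I -> set R[i]), (forall j, cborel (A j)) ->
    P (\bigcap_(j in [set x | x \in J]) (Y j @^-1` A j)) =
    (\prod_(j in J) P (Y j @^-1` A j))%E.

Definition same_law (P : probability T R) (X xi : T -> R[i]) : Prop :=
  forall A, cborel A -> P (X @^-1` A) = P (xi @^-1` A).

Definition cexpect (P : probability T R) (X : T -> R[i]) : R[i] :=
  Complex (fine ('E_P[fun t => complex.Re (X t)]))
          (fine ('E_P[fun t => complex.Im (X t)])).

(* the atom variables: Y (c, k, r, s) is the (r, s) entry of
   D_k (c = 0), U_k (c = 1) or T_k (c = 2), k : 'I_m, r s : 'I_b *)
Definition atom_idx (m b : nat) := ('I_3 * 'I_m * 'I_b * 'I_b)%type.

Definition getY (m b : nat) (Y : atom_idx m b -> T -> R[i])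
    (c : 'I_3) (k r s : nat) (t : T) : R[i] :=
  match insub k, insub r, insub s with
  | Some k', Some r', Some s' => Y (c, k', r', s') t
  | _, _, _ => 0
  end.

(* Block (k,k) is D_k, block (k,k-1) is
   T_{k-1}, block (k,k+1) is U_{k+1}, block indices mod m (if these block
   positions coincide, i.e. m <= 2, the blocks are added). *)
Definition band_mx (m b : nat) (Y : atom_idx m b -> T -> R[i]) (t : T)
    : 'M[R[i]]_(m * b) :=
  \matrix_(i, j)
    let k := (i %/ b)%N in let l := (j %/ b)%N in
    let r := (i %% b)%N in let s := (j %% b)%N in
      (l == k)%:R * getY Y 0 l r s t
    + (l == (k + m.-1) %% m)%N%:R * getY Y 2 l r s t
    + (l == k.+1 %% m)%N%:R * getY Y 1 l r s t.

Definition adj_mx (n : nat) (A : 'M[R[i]]_n) : 'M[R[i]]_n :=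
  map_mx (fun w => w^*) A^T.

Definition Pmat (m b : nat) (Y : atom_idx m b -> T -> R[i]) (z zeta : R[i])
    (t : T) : 'M[R[i]]_(m * b) :=
  let X := Complex ((Num.sqrt (3 * b)%:R)^-1) 0 *: band_mx Y t in
  (X - z%:M) *m adj_mx (X - z%:M) - zeta%:M.

End Defs.

From HB Require Import structures.
From mathcomp Require Import all_boot all_order all_algebra.
From mathcomp Require Import all_classical all_reals all_analysis.
From mathcomp Require Import complex measurable_realfun fingroup perm.
Import Order.TTheory GRing.Theory Num.Theory.
Local Open Scope classical_set_scope.
Local Open Scope ring_scope.

(* Write i = k b + r with r < b.  Relabelling rows and columns by
   x = q b + o |-> ((q + k) mod m) b + (o + r) mod b sends 0 to i, and turns the
   band matrix built from the atoms Y into the one built from Y o s, where s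
   shifts block indices by k and in-block offsets by r; relabelling commutes
   with the resolvent, so the (i, i) resolvent entry at Y is the (0, 0) entry at
   Y o s.  Since the atoms are i.i.d., Y o s and Y have the same joint law (the
   two laws agree on boxes, a pi-system generating the product sigma-algebra),
   and the resolvent entry is a measurable function of the atoms, so the
   expectations agree. *)

Lemma eq_modDr_small (u v p M : nat) : (u < M)%N -> (v < M)%N ->
  ((u + p) %% M == (v + p) %% M)%N = (u == v).
Proof. by move=> hu hv; rewrite eqn_modDr !modn_small. Qed.

Lemma measurable_invr (R : realType) : measurable_fun [set: R] GRing.inv.
Proof.
have -> : GRing.inv = (fun x : R => if x != 0 then x^-1 else 0).
  by apply: funext => x; case: eqP => // ->; rewrite invr0.
have nz : [set: R] `&` (fun x : R => x != 0) @^-1` [set true] = ~` [set 0].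
  by apply/seteqP; split => x /=; [case=> _ /eqP | move/eqP].
apply: measurable_fun_if => //.
  by apply: (measurable_fun_bool true); rewrite nz; exact/measurableC.
rewrite nz; apply: open_continuous_measurable_fun.
  exact/closed_openC/accessible_closed_set1/hausdorff_accessible/Rhausdorff.
by move=> x /set_mem /eqP; exact: inv_continuous.
Qed.

Section ComplexMeasurable.
Context {d : measure_display} {T : measurableType d} {R : realType}.
Implicit Types f g : T -> R[i].

Definition cmeasurable f :=
  measurable_fun setT (fun t => complex.Re (f t)) /\
  measurable_fun setT (fun t => complex.Im (f t)).

Lemma cmeasurable_cst c : cmeasurable (fun _ => c).
Proof. by split; exact: measurable_cst. Qed.

Lemma cmeasurableD f g : cmeasurable f -> cmeasurable g -> cmeasurable (f \+ g).
Proof.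
move=> [f1 f2] [g1 g2].
by split; [under eq_fun do rewrite raddfD | under eq_fun do rewrite raddfD];
  exact: measurable_funD.
Qed.

Lemma cmeasurableN f : cmeasurable f -> cmeasurable (\- f).
Proof.
move=> [f1 f2].
by split; [under eq_fun do rewrite raddfN | under eq_fun do rewrite raddfN];
  exact: measurable_funN.
Qed.

Lemma cmeasurableB f g : cmeasurable f -> cmeasurable g -> cmeasurable (f \- g).
Proof. by move=> mf mg; apply: cmeasurableD => //; exact: cmeasurableN. Qed.

Lemma cmeasurableM f g : cmeasurable f -> cmeasurable g -> cmeasurable (f \* g).
Proof.
move=> [f1 f2] [g1 g2]; split.
- have -> : (fun t => complex.Re ((f \* g) t)) = fun t =>
      complex.Re (f t) * complex.Re (g t) - complex.Im (f t) * complex.Im (g t).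
    by apply/funext => t /=; case: (f t) => ? ?; case: (g t).
  by apply: measurable_funB; exact: measurable_funM.
- have -> : (fun t => complex.Im ((f \* g) t)) = fun t =>
      complex.Re (f t) * complex.Im (g t) + complex.Im (f t) * complex.Re (g t).
    by apply/funext => t /=; case: (f t) => ? ?; case: (g t).
  by apply: measurable_funD; exact: measurable_funM.
Qed.

Lemma cmeasurable_conj f : cmeasurable f -> cmeasurable (fun t => (f t)^*).
Proof.
move=> [f1 f2]; split.
- rewrite (_ : (fun t => _) = fun t => complex.Re (f t)) //.
  by apply/funext => t; case: (f t).
- rewrite (_ : (fun t => _) = fun t => - complex.Im (f t)).
    exact: measurable_funN.
  by apply/funext => t; case: (f t).
Qed.

Lemma cmeasurableV f : cmeasurable f -> cmeasurable (fun t => (f t)^-1).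
Proof.
move=> [f1 f2].
have mV : measurable_fun setT
    (fun t => (complex.Re (f t) ^+ 2 + complex.Im (f t) ^+ 2)^-1).
  apply: measurableT_comp; first exact: measurable_invr.
  by apply: measurable_funD; exact: measurable_funX.
split.
- rewrite (_ : (fun t => _) = fun t => complex.Re (f t) *
      (complex.Re (f t) ^+ 2 + complex.Im (f t) ^+ 2)^-1).
    exact: measurable_funM.
  by apply/funext => t; case: (f t).
- rewrite (_ : (fun t => _) = fun t => - complex.Im (f t) *
      (complex.Re (f t) ^+ 2 + complex.Im (f t) ^+ 2)^-1).
    by apply: measurable_funM => //; exact: measurable_funN.
  by apply/funext => t; case: (f t) => ? ? /=; rewrite mulNr.
Qed.

Lemma cmeasurable_sum (J : Type) (r : seq J) (P : pred J) (F : J -> T -> R[i]) :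
  (forall j, cmeasurable (F j)) -> cmeasurable (fun t => \sum_(j <- r | P j) F j t).
Proof.
by move=> mF; rewrite -fct_sumE; apply: big_ind => //; exact: cmeasurableD.
Qed.

Lemma cmeasurable_prod (J : Type) (r : seq J) (P : pred J) (F : J -> T -> R[i]) :
  (forall j, cmeasurable (F j)) -> cmeasurable (fun t => \prod_(j <- r | P j) F j t).
Proof.
by move=> mF; rewrite -fct_prodE; apply: big_ind => //; exact: cmeasurableM.
Qed.

Lemma cmeasurable_if (c : T -> bool) f g : measurable_fun setT c ->
  cmeasurable f -> cmeasurable g -> cmeasurable (fun t => if c t then f t else g t).
Proof.
move=> mc [f1 f2] [g1 g2].
by split; [under eq_fun do rewrite (fun_if (@complex.Re R)) |
           under eq_fun do rewrite (fun_if (@complex.Im R))]; exact: measurable_fun_ifT.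
Qed.

Lemma measurable_fun_neq0 f : cmeasurable f -> measurable_fun setT (fun t => f t != 0).
Proof.
move=> [f1 f2].
rewrite (_ : (fun t => _) = fun t =>
    ~~ ((complex.Re (f t) == 0) && (complex.Im (f t) == 0))).
  by apply/measurable_neg/measurable_and; apply: measurable_fun_eqr.
by apply/funext => t; case: (f t) => ? ?; rewrite eq_complex.
Qed.

End ComplexMeasurable.

Section MatrixMeasurable.
Context {d : measure_display} {T : measurableType d} {R : realType}.

Definition cmeasurable_mx {n} (M : T -> 'M[R[i]]_n) :=
  forall x y, cmeasurable (fun t => M t x y).

Lemma cmeasurable_mx_cst {n} (A : 'M[R[i]]_n) : cmeasurable_mx (fun _ => A).
Proof. by move=> x y; exact: cmeasurable_cst. Qed.

Lemma cmeasurable_mxB {n} (M N : T -> 'M[R[i]]_n) :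
  cmeasurable_mx M -> cmeasurable_mx N -> cmeasurable_mx (fun t => M t - N t).
Proof. by move=> mM mN x y; under eq_fun do rewrite !mxE; exact: cmeasurableB. Qed.

Lemma cmeasurable_mxZ {n} c (M : T -> 'M[R[i]]_n) :
  cmeasurable_mx M -> cmeasurable_mx (fun t => c *: M t).
Proof.
by move=> mM x y; under eq_fun do rewrite mxE; apply: cmeasurableM => //;
  exact: cmeasurable_cst.
Qed.

Lemma cmeasurable_mxM {n} (M N : T -> 'M[R[i]]_n) :
  cmeasurable_mx M -> cmeasurable_mx N -> cmeasurable_mx (fun t => M t *m N t).
Proof.
move=> mM mN x y; under eq_fun do rewrite mxE.
by apply: cmeasurable_sum => j; exact: cmeasurableM.
Qed.

Lemma cmeasurable_adj_mx {n} (M : T -> 'M[R[i]]_n) :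
  cmeasurable_mx M -> cmeasurable_mx (fun t => adj_mx (M t)).
Proof. by move=> mM x y; under eq_fun do rewrite !mxE; exact: cmeasurable_conj. Qed.

Lemma cmeasurable_det {n} (M : T -> 'M[R[i]]_n) :
  cmeasurable_mx M -> cmeasurable (fun t => \det (M t)).
Proof.
move=> mM; apply: cmeasurable_sum => s.
by apply: cmeasurableM; [exact: cmeasurable_cst | exact: cmeasurable_prod].
Qed.

Lemma cmeasurable_adj {n} (M : T -> 'M[R[i]]_n) :
  cmeasurable_mx M -> cmeasurable_mx (fun t => \adj (M t)).
Proof.
move=> mM x y; under eq_fun do rewrite mxE.
apply: cmeasurableM; first exact: cmeasurable_cst.
by apply: cmeasurable_det => x' y'; under eq_fun do rewrite !mxE.
Qed.

Lemma cmeasurable_invmx {n} (M : T -> 'M[R[i]]_n) :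
  cmeasurable_mx M -> cmeasurable_mx (fun t => invmx (M t)).
Proof.
move=> mM x y; rewrite /invmx.
under eq_fun do rewrite unitmxE unitfE (fun_if (fun A : 'M[R[i]]_n => A x y)) mxE.
apply: cmeasurable_if; first exact/measurable_fun_neq0/cmeasurable_det.
  by apply: cmeasurableM; [exact/cmeasurableV/cmeasurable_det | exact: cmeasurable_adj].
exact: mM.
Qed.

End MatrixMeasurable.

Section BandMeasurable.
Context {d : measure_display} {T : measurableType d} {R : realType} {m b : nat}.
Variable Y : atom_idx m b -> T -> R[i].
Hypothesis mY : forall a, cmeasurable (Y a).

Lemma cmeasurable_getY c k r s : cmeasurable (getY Y c k r s).
Proof.
rewrite /getY; case: insub => [k'|]; last exact: cmeasurable_cst.
case: insub => [r'|]; last exact: cmeasurable_cst.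
by case: insub => [s'|]; [exact: mY | exact: cmeasurable_cst].
Qed.

Lemma cmeasurable_band_mx : cmeasurable_mx (band_mx Y).
Proof.
move=> x y; under eq_fun do rewrite mxE.
by do 2?apply: cmeasurableD; apply: cmeasurableM;
  (exact: cmeasurable_cst || exact: cmeasurable_getY).
Qed.

Lemma cmeasurable_Pmat z zeta : cmeasurable_mx (Pmat Y z zeta).
Proof.
rewrite /Pmat; apply: cmeasurable_mxB (cmeasurable_mx_cst _).
by apply: cmeasurable_mxM; last apply: cmeasurable_adj_mx;
  apply: cmeasurable_mxB (cmeasurable_mx_cst _);
  apply: cmeasurable_mxZ; exact: cmeasurable_band_mx.
Qed.

End BandMeasurable.

(* [g_sigma_algebraType] requires a pointed carrier. *)
HB.instance Definition _ (R : realType) := isPointed.Build R[i] 0.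

Section ComplexVectors.
Context (R : realType) (I : finType).

Definition box (A : I -> set R[i]) : set (I -> R[i]) :=
  [set v | forall a, A a (v a)].

Definition boxes : set (set (I -> R[i])) :=
  [set box A | A in [set A | forall a, cborel (A a)]].

Definition cvec := g_sigma_algebraType boxes.

Lemma cborelT : cborel (@setT R[i]).
Proof. exact: measurableT. Qed.

Lemma cborel_Re (B : set R) :
  measurable B -> cborel [set w : R[i] | B (complex.Re w)].
Proof.
move=> mB; rewrite /cborel (_ : [set p | _] = B `*` setT); first exact: measurableX.
by apply/seteqP; split => p; rewrite /setX /=; tauto.
Qed.

Lemma cborel_Im (B : set R) :
  measurable B -> cborel [set w : R[i] | B (complex.Im w)].
Proof.
move=> mB; rewrite /cborel (_ : [set p | _] = setT `*` B); first exact: measurableX.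
by apply/seteqP; split => p; rewrite /setX /=; tauto.
Qed.

Lemma cborelI (A B : set R[i]) : cborel A -> cborel B -> cborel (A `&` B).
Proof. exact: measurableI. Qed.

Lemma boxesT : boxes setT.
Proof. by exists (fun=> setT) => [_|]; [exact: cborelT | apply/seteqP]. Qed.

Lemma boxes_setI : setI_closed boxes.
Proof.
move=> _ _ [A mA <-] [A' mA' <-].
exists (fun a => A a `&` A' a).
  by move=> a; apply: cborelI; [exact: mA | exact: mA'].
apply/seteqP; split => v /=; first by move=> h; split => a; case: (h a).
by move=> [h h'] a; split; [exact: h | exact: h'].
Qed.

Lemma measurable_coord (a : I) (g : R[i] -> R) :
  (forall B, measurable B -> cborel [set w | B (g w)]) ->
  measurable_fun [set: cvec] (fun v : cvec => g (v a)).
Proof.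
move=> mg _ B mB; rewrite setTI; apply: sub_sigma_algebra.
exists (fun a' => if a' == a then [set w | B (g w)] else setT).
  by move=> a'; case: eqP => _; [exact: mg | exact: cborelT].
apply/seteqP; split => v /=; first by move=> /(_ a); rewrite eqxx.
by move=> Bv a'; case: eqP => [->|].
Qed.

Lemma cmeasurable_coord (a : I) : cmeasurable (fun v : cvec => v a).
Proof. by split; apply: measurable_coord; [exact: cborel_Re | exact: cborel_Im]. Qed.

End ComplexVectors.
Arguments box {R I}.

Section ExpectationLaw.
Context {d d' : measure_display} {T : measurableType d} {S : measurableType d'}.
Context {R : realType} (P : probability T R).
Variables h1 h2 : T -> S.
Hypotheses (mh1 : measurable_fun setT h1) (mh2 : measurable_fun setT h2).
Hypothesis h12 : forall B, measurable B -> P (h1 @^-1` B) = P (h2 @^-1` B).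

Lemma ge0_integral_comp_eq_law (F : S -> \bar R) : measurable_fun setT F ->
  (forall y, 0 <= F y)%E -> (\int[P]_x F (h1 x) = \int[P]_x F (h2 x))%E.
Proof.
move=> mF F0.
rewrite -[LHS](ge0_integral_pushforward mh1 _ measurableT mF (fun y _ => F0 y)).
rewrite -[RHS](ge0_integral_pushforward mh2 _ measurableT mF (fun y _ => F0 y)).
by apply: eq_measure_integral => A mA _; exact: h12.
Qed.

Lemma expectation_comp_eq_law (G : S -> R) : measurable_fun setT G ->
  ('E_P[G \o h1] = 'E_P[G \o h2])%E.
Proof.
move=> mG; rewrite unlock integralE [RHS]integralE.
have mEG : measurable_fun setT (EFin \o G) by exact/measurableT_comp.
rewrite (funepos_comp (EFin \o G) h1) (funepos_comp (EFin \o G) h2).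
rewrite (funeneg_comp (EFin \o G) h1) (funeneg_comp (EFin \o G) h2).
congr (_ - _)%E; apply: ge0_integral_comp_eq_law.
- exact: measurable_funepos.
- exact: funepos_ge0.
- exact: measurable_funeneg.
- exact: funeneg_ge0.
Qed.

Lemma cexpect_comp_eq_law (G : S -> R[i]) : cmeasurable G ->
  cexpect P (G \o h1) = cexpect P (G \o h2).
Proof.
by move=> [mRe mIm]; rewrite /cexpect; congr Complex; congr fine;
  exact: (expectation_comp_eq_law (fun y => _ (G y))).
Qed.

End ExpectationLaw.

Section IidFamilies.
Context {d : measure_display} {T : measurableType d} {R : realType} {I : finType}.
Implicit Types (X : T -> R[i]) (Y : I -> T -> R[i]).

Definition joint Y : T -> cvec R I := fun t a => Y a t.

Lemma measurable_preimage_crv X A : crv X -> cborel A -> measurable (X @^-1` A).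
Proof.
move=> mX mA; rewrite (_ : X @^-1` A = setT `&`
    (fun t => (complex.Re (X t), complex.Im (X t))) @^-1`
    [set p | A (Complex p.1 p.2)]).
  exact: mX.
by apply/seteqP; split => t /=; case: (X t) => // ? ? [].
Qed.

Lemma measurable_joint Y : (forall a, crv (Y a)) -> measurable_fun setT (joint Y).
Proof.
move=> mY; apply: (@measurability _ _ T (cvec R I) setT _ (boxes R I)) => //.
move=> _ [_ [A mA <-] <-]; rewrite setTI.
rewrite (_ : _ @^-1` _ = \bigcap_(a in [set: I]) (Y a @^-1` A a)).
  apply: fin_bigcap_measurable; first exact: finite_finset.
  by move=> a _; exact: measurable_preimage_crv.
by apply/seteqP; split => t /= h a => [_|]; apply: h.
Qed.

Lemma joint_perm_box Y (s : {perm I}) A :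
  joint (fun a => Y (s a)) @^-1` box A = joint Y @^-1` box (fun a => A (s^-1 a)%g).
Proof.
apply/seteqP; split => t h a.
  by have := h (s^-1 a)%g; rewrite /joint permKV.
by have := h (s a); rewrite /joint permK.
Qed.

Variable P : probability T R.

Lemma prob_joint_box Y xi A : cindep P Y -> (forall a, same_law P (Y a) xi) ->
  (forall a, cborel (A a)) ->
  P (joint Y @^-1` box A) = (\prod_a P (xi @^-1` A a))%E.
Proof.
move=> iY lY mA.
rewrite (_ : _ @^-1` _ = \bigcap_(a in [set a | a \in [set: I]%SET]) (Y a @^-1` A a)).
  by rewrite iY //; apply: eq_big => [a | a _]; rewrite ?finset.in_setT ?lY.
by apply/seteqP; split => t h a => [_|]; [exact: h | apply: h; exact: finset.in_setT].
Qed.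

Lemma joint_law_perm Y xi (s : {perm I}) : (forall a, crv (Y a)) -> cindep P Y ->
  (forall a, same_law P (Y a) xi) ->
  forall B, measurable B -> P (joint (fun a => Y (s a)) @^-1` B) = P (joint Y @^-1` B).
Proof.
move=> mY iY lY B mB.
pose law (Z : T -> cvec R I) (mZ : measurable_fun setT Z) :=
  measure_function_pushforward__canonical__measure_function_Measure P mZ.
apply: (@measure_unique _ R (cvec R I) (boxes R I) (fun=> setT) erefl
  (@boxes_setI R I) (fun=> boxesT R I) _
  (law _ (measurable_joint _ (fun a => mY (s a)))) (law _ (measurable_joint _ mY))
  _ _ B mB).
- by apply/seteqP; split => // v _; exists 0%N.
- move=> _ [A mA <-]; rewrite /= /pushforward joint_perm_box.
  by rewrite !(prob_joint_box _ xi) // [RHS](reindex_inj (@perm_inj _ s^-1)).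
- by move=> _; rewrite /= /pushforward preimage_setT probability_setT ltry.
Qed.

End IidFamilies.

Section Relabel.
Context {R : comUnitRingType} {n : nat} (s : 'S_n).
Implicit Types A B M : 'M[R]_n.

Definition relabel_mx M := \matrix_(x, y) M (s x) (s y).

Lemma relabel_mxE M : relabel_mx M = perm_mx s *m M *m perm_mx s^-1.
Proof. by rewrite -row_permE -col_permE; apply/matrixP => x y; rewrite !mxE. Qed.

Lemma relabel_mxB A B : relabel_mx (A - B) = relabel_mx A - relabel_mx B.
Proof. by apply/matrixP => x y; rewrite !mxE. Qed.

Lemma relabel_mxZ c A : relabel_mx (c *: A) = c *: relabel_mx A.
Proof. by apply/matrixP => x y; rewrite !mxE. Qed.

Lemma relabel_scalar_mx c : relabel_mx c%:M = c%:M.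
Proof. by apply/matrixP => x y; rewrite !mxE (inj_eq perm_inj). Qed.

Lemma relabel_mxM A B : relabel_mx (A *m B) = relabel_mx A *m relabel_mx B.
Proof.
apply/matrixP => x y; rewrite !mxE (reindex_inj (@perm_inj _ s)).
by apply: eq_bigr => z _; rewrite !mxE.
Qed.

Lemma unitmx_relabel M : (relabel_mx M \in unitmx) = (M \in unitmx).
Proof. by rewrite relabel_mxE !unitmx_mul !unitmx_perm andbT. Qed.

Lemma invmx_relabel M : invmx (relabel_mx M) = relabel_mx (invmx M).
Proof.
have [uM | nuM] := boolP (M \in unitmx); last first.
  by rewrite !invmx_out // inE unitmx_relabel.
have uRM : relabel_mx M \in unitmx by rewrite unitmx_relabel.
have RM_inv : relabel_mx M *m relabel_mx (invmx M) = 1%:M.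
  by rewrite -relabel_mxM mulmxV // relabel_scalar_mx.
by rewrite -[RHS](mulKmx uRM) RM_inv mulmx1.
Qed.

End Relabel.

Lemma relabel_adj_mx {R : realType} {n} (s : 'S_n) (A : 'M[R[i]]_n) :
  relabel_mx s (adj_mx A) = adj_mx (relabel_mx s A).
Proof. by apply/matrixP => x y; rewrite !mxE. Qed.

Definition add_ord {p : nat} (p_gt0 : (0 < p)%N) (c : nat) (x : 'I_p) : 'I_p :=
  Ordinal (ltn_pmod (x + c) p_gt0).

Lemma add_ord_inj p (p_gt0 : (0 < p)%N) c : injective (add_ord p_gt0 c).
Proof.
by move=> x y /(congr1 val)/eqP; rewrite eq_modDr_small // => /eqP/val_inj.
Qed.

Section BlockShift.
Context {m b : nat} (m_gt0 : (0 < m)%N) (b_gt0 : (0 < b)%N) (k r : nat).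

Definition shift_idx (x : nat) : nat :=
  ((x %/ b + k) %% m * b + (x %% b + r) %% b)%N.

Lemma shift_idx_div x : (shift_idx x %/ b = (x %/ b + k) %% m)%N.
Proof. by rewrite /shift_idx divnMDl // (divn_small (ltn_pmod _ b_gt0)) addn0. Qed.

Lemma shift_idx_mod x : (shift_idx x %% b = (x %% b + r) %% b)%N.
Proof. by rewrite modnMDl modn_mod. Qed.

Lemma shift_idx_lt x : (shift_idx x < m * b)%N.
Proof.
apply: (@leq_trans (((x %/ b + k) %% m).+1 * b)).
  by rewrite mulSnr ltn_add2l ltn_pmod.
by rewrite leq_mul2r ltn_pmod ?orbT.
Qed.

Lemma shift_ord_inj : injective (fun x : 'I_(m * b) => Ordinal (shift_idx_lt x)).
Proof.
move=> x y /(congr1 val) /= xy.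
have /eqP := shift_idx_div x; rewrite xy shift_idx_div eq_sym.
rewrite eq_modDr_small ?ltn_divLR // => /eqP div_xy.
have /eqP := shift_idx_mod x; rewrite xy shift_idx_mod eq_sym.
rewrite eq_modDr_small ?ltn_pmod // => /eqP mod_xy.
by apply: val_inj; rewrite /= (divn_eq x b) (divn_eq y b) div_xy mod_xy.
Qed.

Definition shift_perm : 'S_(m * b) := perm shift_ord_inj.

Definition shift_atom (a : atom_idx m b) : atom_idx m b :=
  (a.1.1.1, add_ord m_gt0 k a.1.1.2, add_ord b_gt0 r a.1.2, add_ord b_gt0 r a.2).

Lemma shift_atom_inj : injective shift_atom.
Proof.
move=> [[[c l] x] y] [[[c' l'] x'] y'] /eqP.
by rewrite !xpair_eqE !(inj_eq (add_ord_inj _ _ _)) -!xpair_eqE => /eqP.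
Qed.

Definition shift_atom_perm : {perm atom_idx m b} := perm shift_atom_inj.

Lemma eq_shift_mod l l' e : (l < m)%N ->
  (l == (l' + e) %% m)%N = ((l + k) %% m == ((l' + k) %% m + e) %% m)%N.
Proof.
by move=> lm; rewrite modnDml addnAC -(modnDml (l' + e)) eq_modDr_small ?ltn_pmod.
Qed.

Context {d : measure_display} {T : measurableType d} {R : realType}.
Implicit Type Y : atom_idx m b -> T -> R[i].

Lemma getY_ord Y c u v w (hu : (u < m)%N) (hv : (v < b)%N) (hw : (w < b)%N) t :
  getY Y c u v w t = Y (c, Ordinal hu, Ordinal hv, Ordinal hw) t.
Proof. by rewrite /getY !insubT. Qed.

Lemma band_mx_shift Y t :
  band_mx (fun a => Y (shift_atom_perm a)) t = relabel_mx shift_perm (band_mx Y t).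
Proof.
apply/matrixP => x y.
rewrite !mxE /shift_perm !permE /= !shift_idx_div !shift_idx_mod.
have xb_lt : (x %/ b < m)%N by rewrite ltn_divLR.
have yb_lt : (y %/ b < m)%N by rewrite ltn_divLR.
have [xb yb] : (x %% b < b)%N /\ (y %% b < b)%N by split; exact: ltn_pmod.
rewrite !(getY_ord _ _ _ _ _ yb_lt xb yb).
rewrite !(getY_ord _ _ _ _ _ (ltn_pmod _ m_gt0) (ltn_pmod _ b_gt0) (ltn_pmod _ b_gt0)).
rewrite /shift_atom_perm !permE /shift_atom /=.
rewrite eqn_modDr (modn_small yb_lt) (modn_small xb_lt).
rewrite -(eq_shift_mod _ _ _ yb_lt) -[((x %/ b + k) %% m).+1]addn1.
by rewrite -eq_shift_mod // addn1.
Qed.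

Lemma Pmat_shift Y z zeta t :
  Pmat (fun a => Y (shift_atom_perm a)) z zeta t =
  relabel_mx shift_perm (Pmat Y z zeta t).
Proof.
by rewrite /Pmat band_mx_shift !relabel_mxB relabel_mxM relabel_adj_mx
  !relabel_mxB relabel_mxZ !relabel_scalar_mx.
Qed.

End BlockShift.

Lemma shift_perm_ord0 m b (m_gt0 : (0 < m)%N) (b_gt0 : (0 < b)%N)
    (i j : 'I_(m * b)) :
  nat_of_ord j = 0%N -> shift_perm m_gt0 b_gt0 (i %/ b) (i %% b) j = i.
Proof.
move=> j0; apply: val_inj.
rewrite /shift_perm permE /= /shift_idx j0 div0n mod0n !add0n.
by rewrite modn_mod (@modn_small (i %/ b)) -?divn_eq // ltn_divLR.
Qed.

Lemma resolvent_diag_shift {d} {T : measurableType d} {R : realType} m b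
    (m_gt0 : (0 < m)%N) (b_gt0 : (0 < b)%N) (Y : atom_idx m b -> T -> R[i])
    z zeta t (i j : 'I_(m * b)) : nat_of_ord j = 0%N ->
  let s := shift_atom_perm m_gt0 b_gt0 (i %/ b) (i %% b) in
  invmx (Pmat Y z zeta t) i i = invmx (Pmat (fun a => Y (s a)) z zeta t) j j.
Proof. by move=> j0 /=; rewrite Pmat_shift invmx_relabel mxE shift_perm_ord0. Qed.

Theorem lemmaA8 (R : realType) (d : measure_display) (T : measurableType d)
    (P : probability T R) (xi : T -> R[i]) (eps : R) (m b : nat)
    (Y : atom_idx m b -> T -> R[i]) (z zeta : R[i]) :
  crv xi ->
  cexpect P xi = 0 ->
  ('E_P[fun t => (cmod (xi t) ^+ 2)%R] = 1)%E ->
  0 < eps ->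
  ('E_P[fun t => (cmod (xi t) `^ (4 + eps))%R] < +oo)%E ->
  (0 < b)%N ->
  (forall a, crv (Y a)) ->
  cindep P Y ->
  (forall a, same_law P (Y a) xi) ->
  0 < complex.Im zeta ->
  forall i j : 'I_(m * b), nat_of_ord j = 0%N ->
    cexpect P (fun t => (invmx (Pmat Y z zeta t)) i i) =
    cexpect P (fun t => (invmx (Pmat Y z zeta t)) j j).
Proof.
move=> _ _ _ _ _ b_gt0 mY iY lY _ i j j0.
have m_gt0 : (0 < m)%N.
  by have := leq_ltn_trans (leq0n i) (ltn_ord i); rewrite muln_gt0 => /andP[].
pose G (v : cvec R (atom_idx m b)) :=
  invmx (Pmat (fun a (w : cvec R (atom_idx m b)) => w a) z zeta v) j j.
have mG : cmeasurable G.
  by apply: cmeasurable_invmx; apply: cmeasurable_Pmat; exact: cmeasurable_coord.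
pose s := shift_atom_perm m_gt0 b_gt0 (i %/ b) (i %% b).
transitivity (cexpect P (G \o joint (fun a => Y (s a)))).
  by congr cexpect; apply/funext => t; exact: resolvent_diag_shift.
(* [G \o joint Z] is convertible to the (j, j) resolvent entry built from Z. *)
exact: cexpect_comp_eq_law (measurable_joint _ (fun a => mY (s a)))
  (measurable_joint _ mY) (joint_law_perm P Y xi s mY iY lY) _ mG.
Qed.
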